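(* Let $u,v$ be two different essential vertices of a multigraph $H$, and let $P$ be any simple path in $H$ from $u$ to $v$. Then every edge traversed by $P$ is essential.
   Context: Multigraphs are undirected and may contain parallel edges and self-loops (a self-loop is a cycle of length one, two parallel edges form a cycle of length two). An edge $e$ of $H$ is essential if it lies on a cycle of $H$, or it is a bridge whose removal creates two new connected components each containing a cycle. An incidence is a pair $(u,e)$ with $e$ incident to $u$, a self-loop at $u$ giving two incidences. A vertex is essential if it participates in at least three incidences with essential edges. *)

(* Finite multigraphs: vertex type V, edge type E (both finite),
   each edge e has an (unordered) pair of endpoints [ends e]; a self-loop at u
   has ends e = (u, u). Parallel edges are distinct elements of E with the same ends. *)
From mathcomp Require Import all_boot.
From mathcomp Require Import boolp.
Set Implicit Arguments. Unset Strict Implicit. Unset Printing Implicit Defensive.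

Section Multigraph.
Variables (V E : finType) (ends : E -> V * V).

Definition link (e : E) (x y : V) : bool :=
  (ends e == (x, y)) || (ends e == (y, x)).

Fixpoint walk (ok : pred E) (x : V) (p : seq (E * V)) : bool :=
  match p with
  | [::] => true
  | (e, y) :: p' => [&& ok e, link e x y & walk ok y p']
  end.

Definition target (x : V) (p : seq (E * V)) : V := last x (map snd p).

(* A self-loop is a cycle of
   length one; two parallel edges form a cycle of length two. *)
Definition is_cycle (ok : pred E) (x : V) (p : seq (E * V)) : bool :=
  [&& walk ok x p, p != [::], target x p == x,
      uniq (map fst p) & uniq (map snd p)].

Definition on_cycle (e : E) : Prop :=
  exists x p, is_cycle predT x p /\ e \in map fst p.

Definition connected_in (ok : pred E) (a b : V) : Prop :=
  exists p, walk ok a p /\ target a p = b.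

Definition comp_has_cycle (ok : pred E) (a : V) : Prop :=
  exists x p, is_cycle ok x p /\ connected_in ok a x.

Definition cyclic_bridge (e : E) : Prop :=
  let ok := predC1 e in
  let a := (ends e).1 in let b := (ends e).2 in
  [/\ a != b, ~ connected_in ok a b, comp_has_cycle ok a & comp_has_cycle ok b].

Definition essential_edge (e : E) : Prop := on_cycle e \/ cyclic_bridge e.

(* number of incidences (u, e) with e essential; a self-loop counts twice *)
Definition ess_incidences (u : V) : nat :=
  \sum_(e : E | `[< essential_edge e >]) (((ends e).1 == u) + ((ends e).2 == u)).

Definition essential_vertex (u : V) : Prop := 3 <= ess_incidences u.

Definition simple_path (u v : V) (p : seq (E * V)) : bool :=
  [&& walk predT u p, target u p == v & uniq (u :: map snd p)].

End Multigraph.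

(* Let e be an edge of the simple path, from x to y, and suppose e lies on no
   cycle. Then x and y are not connected in H - e, and the path shows that u
   lies in the component of x and v in that of y. It remains to see that the
   component C of H - e containing an essential vertex z has a cycle. If not,
   every essential edge f <> e at z lies in C. A cycle through f avoids e, so
   it lies in C. If f is a bridge with a cycle on each side, each side reaches
   its cycle only through e (otherwise the cycle is in C), so both ends of f
   are connected to an end of e in H - f, contradicting that f is a bridge.
   Hence only e gives incidences at z, at most two, so z is not essential. *)
From mathcomp Require Import all_boot.
From mathcomp Require Import boolp.
Set Implicit Arguments. Unset Strict Implicit. Unset Printing Implicit Defensive.

Section Walks.
Variables (V E : finType) (ends : E -> V * V).
Implicit Types (ok : pred E) (x y z : V) (e f g : E) (p q : seq (E * V)).

Local Notation walk := (walk ends).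
Local Notation link := (link ends).
Local Notation connected := (connected_in ends).

Lemma target_cat x p q : target x (p ++ q) = target (target x p) q.
Proof. by rewrite /target map_cat last_cat. Qed.

Lemma walk_cat ok x p q : walk ok x (p ++ q) = walk ok x p && walk ok (target x p) q.
Proof. by elim: p x => [|[g y] p IH] x //=; rewrite IH !andbA. Qed.

Lemma sub_walk ok ok' x p :
  (forall g, g \in map fst p -> ok' g) -> walk ok x p -> walk ok' x p.
Proof.
elim: p x => [|[g y] p IH] x //= ok'p /and3P [_ -> /IH ->] //.
- by rewrite ok'p ?mem_head.
- by move=> h hp; rewrite ok'p // in_cons hp orbT.
Qed.

Lemma walk_edge_ok ok x p g : walk ok x p -> g \in map fst p -> ok g.
Proof.
elim: p x => [|[h y] p IH] x //= /and3P [okh _ wp].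
by rewrite in_cons => /orP [/eqP -> // | /(IH _ wp)].
Qed.

Lemma walk_avoid ok e x p : e \notin map fst p -> walk ok x p -> walk (predC1 e) x p.
Proof. by move=> ep; apply: sub_walk => g gp /=; apply: contraNneq ep => <-. Qed.

Lemma link_sym g x y : link g x y = link g y x.
Proof. by rewrite /link orbC. Qed.

Lemma link_ends g : link g (ends g).1 (ends g).2.
Proof. by rewrite /link -surjective_pairing eqxx. Qed.

Lemma connected_refl ok x : connected ok x x.
Proof. by exists [::]. Qed.

Lemma connected_cons ok g x y z : ok g -> link g x y -> connected ok y z -> connected ok x z.
Proof. by move=> okg gxy [p [wp <-]]; exists ((g, y) :: p); rewrite /= okg gxy wp. Qed.

Lemma connected_trans ok x y z : connected ok x y -> connected ok y z -> connected ok x z.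
Proof.
move=> [p [wp <-]] [q [wq <-]].
by exists (p ++ q); rewrite walk_cat wp wq target_cat.
Qed.

Lemma connected_sym ok x y : connected ok x y -> connected ok y x.
Proof.
move=> [p [wp <-]]; elim: p x wp => [|[g w] p IH] x /=.
  by move=> _; apply: connected_refl.
case/and3P=> okg gxy /IH tw; apply: connected_trans tw _.
by apply: connected_cons okg _ (connected_refl _ _); rewrite link_sym.
Qed.

Lemma connected_edge ok g : ok g -> connected ok (ends g).1 (ends g).2.
Proof. by move=> okg; apply: connected_cons okg (link_ends g) (connected_refl _ _). Qed.

Lemma walk_connected_ends ok x p g : walk ok x p -> g \in map fst p ->
  connected ok x (ends g).1 /\ connected ok x (ends g).2.
Proof.
elim: p x => [|[h y] p IH] x //= /and3P [okh hxy wp].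
rewrite in_cons => /orP [/eqP -> | /(IH _ wp) [c1 c2]].
- have cxy := connected_cons okh hxy (connected_refl ok y).
  by case/orP: hxy => /eqP ->; split=> //=; apply: connected_refl.
- by split; apply: connected_cons okh hxy _.
Qed.

Lemma walk_ends_mem ok x p g : walk ok x p -> g \in map fst p ->
  ((ends g).1 \in x :: map snd p) && ((ends g).2 \in x :: map snd p).
Proof.
elim: p x => [|[h y] p IH] x //= /and3P [_ hxy wp].
rewrite in_cons => /orP [/eqP -> | /(IH _ wp) /andP [g1 g2]].
- by case/orP: hxy => /eqP -> /=; rewrite !in_cons !eqxx ?orbT.
- by rewrite in_cons g1 orbT in_cons g2 orbT.
Qed.

Lemma simple_walk_uniq_edges ok x p :
  walk ok x p -> uniq (x :: map snd p) -> uniq (map fst p).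
Proof.
elim: p x => [|[g y] p IH] x //= /and3P [_ gxy wp] /andP [xp up].
rewrite (IH y wp up) andbT; apply: contra xp => /(walk_ends_mem wp) /andP [g1 g2].
by case/orP: gxy => /eqP gE; rewrite gE /= in g1 g2.
Qed.

Definition adjacent ok : rel V := fun x y => [exists g, ok g && link g x y].

Lemma walk_path ok x p : walk ok x p -> path (adjacent ok) x (map snd p).
Proof.
elim: p x => [|[g y] p IH] x //= /and3P [okg gxy /IH ->].
by rewrite andbT; apply/existsP; exists g; rewrite okg gxy.
Qed.

Lemma path_walk ok x s : path (adjacent ok) x s -> exists2 p, walk ok x p & map snd p = s.
Proof.
elim: s x => [|y s IH] x /=; first by exists [::].
case/andP=> /existsP [g /andP [okg gxy]] /IH [p wp <-].
by exists ((g, y) :: p); rewrite //= okg gxy wp.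
Qed.

Lemma walk_shorten ok x p : walk ok x p ->
  exists q, [/\ walk ok x q, target x q = target x p & uniq (x :: map snd q)].
Proof.
move/walk_path; rewrite {2}/target; case/shortenP=> s ps us _.
have [q wq qs] := path_walk ps.
by exists q; rewrite /target qs.
Qed.

Lemma sub_cycle ok ok' x q :
  (forall g, g \in map fst q -> ok' g) -> is_cycle ends ok x q -> is_cycle ends ok' x q.
Proof. by move=> ok'q /and5P [wq *]; apply/and5P; split => //; apply: sub_walk wq. Qed.

Lemma simple_path_split u v e y p1 p2 : simple_path ends u v (p1 ++ (e, y) :: p2) ->
  [/\ link e (target u p1) y, connected (predC1 e) u (target u p1)
    & connected (predC1 e) y v].
Proof.
case/and3P=> wp /eqP tp up; have := simple_walk_uniq_edges wp up.
rewrite map_cat cat_uniq /= => /and3P [_ /norP [ep1 _] /andP [ep2 _]].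
move: wp tp; rewrite walk_cat target_cat /= => /andP [wp1 /andP [exy wp2]] tp.
split=> //; [exists p1 | exists p2]; split=> //.
- exact: walk_avoid ep1 wp1.
- exact: walk_avoid ep2 wp2.
Qed.

Lemma ess_incidences_le2 e z :
  (forall f, f != e -> essential_edge ends f -> ((ends f).1 != z) && ((ends f).2 != z)) ->
  ess_incidences ends z <= 2.
Proof.
move=> others; rewrite /ess_incidences big_mkcond (bigD1 e) //= big1 ?addn0.
  by case: asboolP => _ //; case: (_ == z); case: (_ == z).
by move=> f fe; case: asboolP => // /(others _ fe) /andP [/negbTE -> /negbTE ->].
Qed.

End Walks.

Section OffCycleEdge.
Variables (V E : finType) (ends : E -> V * V) (e : E).
Hypothesis e_off_cycle : ~ on_cycle ends e.
Implicit Types (x y z : V) (f g : E) (q : seq (E * V)).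

Local Notation connected := (connected_in ends).

Lemma cycle_avoid_off_cycle ok x q : is_cycle ends ok x q -> is_cycle ends (predC1 e) x q.
Proof.
move=> cq; apply: (sub_cycle _ cq) => g gq /=; apply/eqP => ge; apply: e_off_cycle.
by exists x, q; rewrite -ge; split=> //; apply: sub_cycle cq.
Qed.

Lemma off_cycle_not_connected : ~ connected (predC1 e) (ends e).1 (ends e).2.
Proof.
case=> p0 [wp0 tp0]; have [q [wq tq uq]] := walk_shorten wp0; rewrite tp0 in tq.
apply: e_off_cycle; exists (ends e).2, ((e, (ends e).1) :: q); split; last exact: mem_head.
apply/and5P; split=> //=.
- by rewrite link_sym link_ends; apply: sub_walk wq.
- exact/eqP.
- rewrite (simple_walk_uniq_edges wq uq) andbT.
  by apply/negP => /(walk_edge_ok wq) /=; rewrite eqxx.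
Qed.

Section AcyclicComponent.
Variable c : V.
Hypothesis c_acyclic : ~ comp_has_cycle ends (predC1 e) c.

Lemma cycle_edge_outside_component f : on_cycle ends f -> ~ connected (predC1 e) c (ends f).1.
Proof.
case=> x [q [cq fq]] cf; apply: c_acyclic; exists x, q.
have cq' := cycle_avoid_off_cycle cq; split=> //.
case/and5P: cq' => wq _ _ _ _.
exact: connected_trans cf (connected_sym (walk_connected_ends wq fq).1).
Qed.

Lemma cyclic_side_reaches_e f t : connected (predC1 e) c t ->
  comp_has_cycle ends (predC1 f) t -> connected (predC1 f) t (ends e).1.
Proof.
move=> ct [x [q [cq [r [wr tr]]]]].
case: (boolP (e \in map fst r)) => er; first exact: (walk_connected_ends wr er).1.
case: c_acyclic; exists x, q; split; first exact: cycle_avoid_off_cycle cq.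
by apply: connected_trans ct _; exists r; split=> //; apply: walk_avoid wr.
Qed.

Lemma cyclic_bridge_outside_component f : f != e -> cyclic_bridge ends f ->
  ~ connected (predC1 e) c (ends f).1.
Proof.
move=> fe [_ not_conn side1 side2] cf1; apply: not_conn.
have cf2 := connected_trans cf1 (connected_edge ends (fe : predC1 e f)).
exact: connected_trans (cyclic_side_reaches_e cf1 side1)
                       (connected_sym (cyclic_side_reaches_e cf2 side2)).
Qed.

Lemma acyclic_component_no_essential_vertex z :
  connected (predC1 e) c z -> ~ essential_vertex ends z.
Proof.
move=> cz; apply/negP; rewrite -ltnNge ltnS.
apply: (ess_incidences_le2 (e := e)) => f fe ef.
have f1 : ~ connected (predC1 e) c (ends f).1.
  case: ef; first exact: cycle_edge_outside_component.
  exact: cyclic_bridge_outside_component fe.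
have f12 := connected_edge ends (fe : predC1 e f).
apply/andP; split; apply: contra_notN f1 => /eqP fz; first by rewrite fz.
by rewrite -fz in cz; apply: connected_trans cz (connected_sym f12).
Qed.

End AcyclicComponent.

Lemma essential_vertex_component_has_cycle z c :
  essential_vertex ends z -> connected (predC1 e) z c -> comp_has_cycle ends (predC1 e) c.
Proof.
move=> ez zc; case: (pselect (comp_has_cycle ends (predC1 e) c)) => // c_acyclic.
by case: (acyclic_component_no_essential_vertex c_acyclic (connected_sym zc)).
Qed.

Lemma off_cycle_cyclic_bridge u v :
  essential_vertex ends u -> essential_vertex ends v ->
  connected (predC1 e) u (ends e).1 -> connected (predC1 e) v (ends e).2 ->
  cyclic_bridge ends e.
Proof.
move=> eu ev ue1 ve2; split.
- by apply: contra_notN off_cycle_not_connected => /eqP ->; apply: connected_refl.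
- exact: off_cycle_not_connected.
- exact: essential_vertex_component_has_cycle eu ue1.
- exact: essential_vertex_component_has_cycle ev ve2.
Qed.

End OffCycleEdge.

Theorem lemma5p3 (V E : finType) (ends : E -> V * V) (u v : V)
  (p : seq (E * V)) :
  u != v ->
  essential_vertex ends u -> essential_vertex ends v ->
  simple_path ends u v p ->
  forall e, e \in map fst p -> essential_edge ends e.
Proof.
move=> _ eu ev + _ /mapP [[e y] ep ->] /=.
case/splitPr: ep => p1 p2 sp.
case: (pselect (on_cycle ends e)) => [|e_off]; [by left | right].
have [exy ux yv] := simple_path_split sp.
case/orP: exy => /eqP eE.
- by apply: (off_cycle_cyclic_bridge e_off eu ev); rewrite eE //; apply: connected_sym.
- by apply: (off_cycle_cyclic_bridge e_off ev eu); rewrite eE //; apply: connected_sym.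
Qed.
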